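(* For $q\in\mathbb{C}$ with $|q|<1$ and each integer $n\ge0$, let $$K_{n,q}=[2]_q\left(\frac{1}{1-q}\right)^n\sum_{l=0}^n\binom nl(-1)^l\frac{1}{1+q^{l+1}}.$$ Then for every $n\ge 0$, $\lim_{q\to1}K_{n,q}=E_n$, where the Euler numbers $E_n$ are defined by $\frac{2}{e^t+1}=\sum_{n=0}^\infty E_n\frac{t^n}{n!}$ for $|t|<\pi$.
   Context: For $q\in\mathbb{C}$ with $|q|<1$, $[2]_q=1+q$. The limit is taken with $q$ in the open unit disk tending to $1$. *)

From Stdlib Require Import Reals.
From Coquelicot Require Import Coquelicot.
Open Scope R_scope.

Definition binomR (n l : nat) : R := Binomial.C n l.

Definition qint2 (q : C) : C := (1 + q)%C.

Definition K (n : nat) (q : C) : C :=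
  (qint2 q * Cpow (/ (1 - q))%C n *
   sum_n (fun l : nat =>
     (RtoC (binomR n l) * Cpow (RtoC (-1)) l / (1 + Cpow q (S l)))%C) n)%C.

Definition is_Euler_numbers (E : nat -> R) : Prop :=
  forall t : R, Rabs t < PI ->
    is_series (fun n : nat => E n * t ^ n / INR (Factorial.fact n)) (2 / (exp t + 1)).

Definition to_one_in_disk : (C -> Prop) -> Prop :=
  within (fun q : C => Cmod q < 1) (locally (RtoC 1)).

(* Let a_l = 1/(1 + q^(l+1)) and let Δ be the difference quotient
   (Δa)_j = (a_j - a_(j+1))/(1 - q), so that K_(n,q) = [2]_q (Δ^n a)_0.  Applying
   Δ^n to the identity a_l + q q^l a_l = 1 and expanding with the q-Leibniz rule
   (Δ^n (q^l b_l))_0 = Σ_k C(n,k) q^k (Δ^k b)_0 gives, for n >= 1,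
   K_(n,q) + q Σ_(k<=n) C(n,k) q^k K_(k,q) = 0.  As q -> 1 this becomes
   2 E_n + Σ_(k<n) C(n,k) E_k = 0, the recurrence read off coefficientwise from
   (e^t + 1) * 2/(e^t + 1) = 2; with K_(0,q) = 1 = E_0, induction on n concludes. *)

From Stdlib Require Import Reals Lia Lra FunctionalExtensionality.
From Coquelicot Require Import Coquelicot.

Lemma CV_radius_ge_of_ex_series (a : nat -> R) (r : R) :
  ex_series (fun n => a n * r ^ n) -> Rbar_le (Rabs r) (CV_radius a).
Proof.
  intros Hs. apply CV_radius_bounded.
  destruct (filterlim_bounded (fun n => a n * r ^ n)) as [M HM].
  { exists 0. exact (ex_series_lim_0 _ Hs). }
  exists M. intro n.
  rewrite RPow_abs, Rabs_mult, Rabs_Rabsolu, <- Rabs_mult. apply HM.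
Qed.

Definition PS_const (c : R) (n : nat) : R := match n with O => c | S _ => 0 end.

Lemma is_pseries_const (c t : R) : is_pseries (PS_const c) t c.
Proof.
  apply is_pseries_R. unfold is_series.
  apply filterlim_ext with (fun _ => c); [|apply filterlim_const].
  intro n; induction n as [|n IH].
  - rewrite sum_O. simpl. ring.
  - rewrite sum_Sn, <- IH. change (c = c + 0 * (t * t ^ n)). ring.
Qed.

Lemma PS_eq_const_of_is_pseries (b : nat -> R) (c r : R) : 0 < r ->
  (forall t, Rabs t < r -> is_pseries b t c) -> forall n, b n = PS_const c n.
Proof.
  intros Hr Hb n.
  assert (Hr2 : Rabs (r / 2) < r) by (rewrite Rabs_pos_eq; lra).
  apply PSeries_ext_recip.
  - apply (Rbar_lt_le_trans _ (Rabs (r / 2))); [simpl; rewrite Rabs_pos_eq; lra|].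
    apply CV_radius_ge_of_ex_series. exists c. apply is_pseries_R, Hb, Hr2.
  - apply (Rbar_lt_le_trans _ (Rabs 1)); [simpl; rewrite Rabs_R1; lra|].
    apply CV_radius_ge_of_ex_series. exists c. apply is_pseries_R, is_pseries_const.
  - exists (mkposreal r Hr). intros x Hx.
    assert (Hx' : Rabs x < r).
    { change (Rabs (x - 0) < r) in Hx. rewrite Rminus_0_r in Hx. exact Hx. }
    rewrite (is_pseries_unique _ _ _ (Hb x Hx')).
    symmetry. apply is_pseries_unique, is_pseries_const.
Qed.

Lemma PI_gt_1 : 1 < PI.
Proof. pose proof PI2_1. lra. Qed.

Section EulerNumbers.

Variable E : nat -> R.
Hypothesis HE : is_Euler_numbers E.

Let egf (n : nat) : R := E n / INR (Factorial.fact n).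
Let exp_coeffs (n : nat) : R := / INR (Factorial.fact n).

Lemma is_pseries_Euler_egf (t : R) :
  Rabs t < PI -> is_pseries egf t (2 / (exp t + 1)).
Proof.
  intro Ht. apply is_pseries_R. refine (is_series_ext _ _ _ _ (HE t Ht)).
  intro n. unfold egf, Rdiv.
  rewrite Rmult_assoc, (Rmult_comm (t ^ n)), <- Rmult_assoc. reflexivity.
Qed.

Lemma CV_radius_Euler_egf : Rbar_le 1 (CV_radius egf).
Proof.
  rewrite <- Rabs_R1. apply CV_radius_ge_of_ex_series.
  eexists. apply is_pseries_R, is_pseries_Euler_egf.
  rewrite Rabs_R1. apply PI_gt_1.
Qed.

Lemma CV_radius_exp_coeffs : Rbar_le 1 (CV_radius exp_coeffs).
Proof.
  rewrite <- Rabs_R1. apply CV_radius_ge_of_ex_series.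
  eexists. apply is_pseries_R, is_exp_Reals.
Qed.

(* The coefficientwise form of [(exp t + 1) * (2 / (exp t + 1)) = 2]. *)
Lemma Euler_egf_convolution (n : nat) :
  PS_plus (PS_mult egf exp_coeffs) egf n = PS_const 2 n.
Proof.
  apply (PS_eq_const_of_is_pseries _ _ 1 Rlt_0_1). intros t Ht.
  assert (Hrad : forall a, Rbar_le 1 (CV_radius a) -> Rbar_lt (Rabs t) (CV_radius a)).
  { intros a Ha. exact (Rbar_lt_le_trans (Rabs t) 1 _ Ht Ha). }
  assert (Hegf := is_pseries_Euler_egf t ltac:(pose proof PI_gt_1; lra)).
  replace 2 with (plus (2 / (exp t + 1) * exp t) (2 / (exp t + 1))).
  - refine (is_pseries_plus _ _ _ _ _ _ Hegf).
    exact (is_pseries_mult _ _ _ _ _ Hegf (is_exp_Reals t)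
             (Hrad _ CV_radius_Euler_egf) (Hrad _ CV_radius_exp_coeffs)).
  - change (2 / (exp t + 1) * exp t + 2 / (exp t + 1) = 2).
    pose proof (exp_pos t). field. lra.
Qed.

Lemma Euler_0 : E 0 = 1.
Proof.
  pose proof (Euler_egf_convolution 0) as H.
  unfold PS_plus, PS_mult, egf, exp_coeffs in H. simpl in H.
  change (E 0 / 1 * / 1 + E 0 / 1 = 2) in H. lra.
Qed.

Lemma Euler_succ (n : nat) :
  E (S n) = - sum_f_R0 (fun k => Binomial.C (S n) k * E k) n / 2.
Proof.
  pose proof (Euler_egf_convolution (S n)) as H.
  change (sum_f_R0 (fun k => egf k * exp_coeffs (S n - k)) (S n) + egf (S n) = 0) in H.
  assert (Hbinom : sum_f_R0 (fun k => Binomial.C (S n) k * E k) (S n) + E (S n) = 0).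
  { rewrite <- (Rmult_0_r (INR (Factorial.fact (S n)))), <- H.
    rewrite Rmult_plus_distr_l, scal_sum. f_equal.
    - apply sum_eq. intros k Hk. unfold Binomial.C, egf, exp_coeffs.
      pose proof (INR_fact_neq_0 k). pose proof (INR_fact_neq_0 (S n - k)).
      field. auto.
    - unfold egf. field. apply INR_fact_neq_0. }
  rewrite tech5, Rcomplements.C_n_n in Hbinom. lra.
Qed.

End EulerNumbers.

Open Scope C_scope.

(* [ring] and [field] need [@eq C]; Coquelicot's sum lemmas produce equalities
   at structure sorts such as [AbelianMonoid.sort C_AbelianMonoid]. *)
Ltac ring_C := lazymatch goal with |- @eq _ ?x ?y => change (@eq C x y); cbv beta; ring end.
Ltac field_C := lazymatch goal with |- @eq _ ?x ?y => change (@eq C x y); cbv beta; field end.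

Lemma sum_n_Cplus (f g : nat -> C) (m : nat) :
  sum_n (fun k => f k + g k) m = sum_n f m + sum_n g m.
Proof. exact (sum_n_plus f g m). Qed.

Lemma sum_n_Cmult_l (c : C) (f : nat -> C) (m : nat) :
  sum_n (fun k => c * f k) m = c * sum_n f m.
Proof. exact (@sum_n_mult_l C_Ring c f m). Qed.

Lemma sum_n_Cmult_r (c : C) (f : nat -> C) (m : nat) :
  sum_n (fun k => f k * c) m = sum_n f m * c.
Proof. exact (@sum_n_mult_r C_Ring c f m). Qed.

Lemma sum_n_succ_r (f : nat -> C) (m : nat) :
  sum_n f (S m) = sum_n f m + f (S m).
Proof. exact (sum_Sn f m). Qed.

Lemma sum_n_succ_l (f : nat -> C) (m : nat) :
  sum_n f (S m) = f 0%nat + sum_n (fun k => f (S k)) m.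
Proof. unfold sum_n. rewrite sum_Sn_m by lia. rewrite sum_n_m_S. reflexivity. Qed.

Lemma sum_n_binom_succ (n : nat) (f : nat -> C) :
  sum_n (fun k => RtoC (binomR (S n) k) * f k) (S n) =
  sum_n (fun k => RtoC (binomR n k) * f k) n +
  sum_n (fun k => RtoC (binomR n k) * f (S k)) n.
Proof.
  unfold binomR. destruct n as [|n].
  - rewrite sum_Sn, !sum_O, !Rcomplements.C_n_0, Rcomplements.C_n_n. reflexivity.
  - rewrite sum_n_succ_l, sum_n_succ_r, sum_n_succ_l.
    rewrite (sum_n_succ_r (fun k => RtoC (Binomial.C (S n) k) * f (S k))).
    rewrite (sum_n_ext_loc _ (fun k => RtoC (Binomial.C (S n) (S k)) * f (S k) +
                                    RtoC (Binomial.C (S n) k) * f (S k))).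
    + rewrite sum_n_Cplus, !Rcomplements.C_n_0, !Rcomplements.C_n_n.
      ring_C.
    + intros k Hk. rewrite <- Binomial.pascal by lia. rewrite RtoC_plus. ring_C.
Qed.

Lemma RtoC_m1 : RtoC (-1) = - (1).
Proof. unfold RtoC, Copp. simpl. f_equal; ring. Qed.

Lemma sum_n_alt_binom_succ (a : nat -> C) (n j : nat) :
  sum_n (fun l => RtoC (binomR (S n) l) * Cpow (RtoC (-1)) l * a (j + l)%nat) (S n) =
  sum_n (fun l => RtoC (binomR n l) * Cpow (RtoC (-1)) l * a (j + l)%nat) n -
  sum_n (fun l => RtoC (binomR n l) * Cpow (RtoC (-1)) l * a (S j + l)%nat) n.
Proof.
  set (f l := Cpow (RtoC (-1)) l * a (j + l)%nat).
  rewrite (sum_n_ext _ (fun l => RtoC (binomR (S n) l) * f l)) by (intro; unfold f; ring_C).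
  rewrite sum_n_binom_succ.
  rewrite (sum_n_ext (fun l => RtoC (binomR n l) * f (S l))
    (fun l => - (1) * (RtoC (binomR n l) * Cpow (RtoC (-1)) l * a (S j + l)%nat))).
  - rewrite sum_n_Cmult_l, (sum_n_ext (fun l => RtoC (binomR n l) * f l)
      (fun l => RtoC (binomR n l) * Cpow (RtoC (-1)) l * a (j + l)%nat))
      by (intro; unfold f; ring_C).
    ring_C.
  - intro l. unfold f. rewrite Nat.add_succ_r. simpl. rewrite RtoC_m1. ring_C.
Qed.

Section DifferenceQuotients.

Variable q : C.
Hypothesis Hq : 1 - q <> 0.

Fixpoint qdiff (a : nat -> C) (n j : nat) : C :=
  match n with
  | O => a j
  | S n => (qdiff a n j - qdiff a n (S j)) / (1 - q)
  end.

Lemma qdiff_closed_form (a : nat -> C) (n j : nat) :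
  qdiff a n j = Cpow (/ (1 - q)) n *
    sum_n (fun l => RtoC (binomR n l) * Cpow (RtoC (-1)) l * a (j + l)%nat) n.
Proof.
  revert j. induction n as [|n IH]; intro j.
  - rewrite sum_O. unfold binomR. rewrite Rcomplements.C_n_0, Nat.add_0_r. simpl. ring_C.
  - simpl qdiff. rewrite !IH, sum_n_alt_binom_succ. simpl Cpow. field_C. exact Hq.
Qed.

Lemma qdiff_linear (a b : nat -> C) (c : C) (n j : nat) :
  qdiff (fun l => a l + c * b l) n j = qdiff a n j + c * qdiff b n j.
Proof.
  revert j. induction n as [|n IH]; intro j; simpl.
  - reflexivity.
  - rewrite !IH. field_C. exact Hq.
Qed.

Lemma qdiff_const (c : C) (n j : nat) : qdiff (fun _ => c) (S n) j = 0.
Proof.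
  revert j. induction n as [|n IH]; intro j.
  - simpl. unfold Cdiv. ring_C.
  - change ((qdiff (fun _ => c) (S n) j - qdiff (fun _ => c) (S n) (S j)) / (1 - q) = 0).
    rewrite !IH. unfold Cdiv. ring_C.
Qed.

Lemma qdiff_qpow_mul (b : nat -> C) (n j : nat) :
  qdiff (fun l => Cpow q l * b l) n j =
  Cpow q j * sum_n (fun k => RtoC (binomR n k) * (Cpow q k * qdiff b k j)) n.
Proof.
  revert j. induction n as [|n IH]; intro j.
  - rewrite sum_O. unfold binomR. rewrite Rcomplements.C_n_0. simpl. ring_C.
  - rewrite sum_n_binom_succ. simpl qdiff at 1. rewrite !IH.
    rewrite <- sum_n_Cplus.
    rewrite (sum_n_ext (fun k => RtoC (binomR n k) * (Cpow q k * qdiff b k j) +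
                                 RtoC (binomR n k) * (Cpow q (S k) * qdiff b (S k) j))
      (fun k => (RtoC (binomR n k) * (Cpow q k * qdiff b k j) +
       - q * (RtoC (binomR n k) * (Cpow q k * qdiff b k (S j)))) / (1 - q)))
      by (intro k; simpl; field_C; exact Hq).
    unfold Cdiv. rewrite sum_n_Cmult_r, sum_n_Cplus, sum_n_Cmult_l. simpl. ring_C.
Qed.

End DifferenceQuotients.

Lemma one_minus_neq0 (q : C) : Cmod q < 1 -> 1 - q <> 0.
Proof.
  intros Hq H. apply Ceq_minus in H. subst q. rewrite Cmod_1 in Hq. lra.
Qed.

Lemma one_plus_Cpow_neq0 (q : C) (m : nat) : Cmod q < 1 -> 1 + Cpow q (S m) <> 0.
Proof.
  intros Hq H.
  assert (Hpow : Cmod (Cpow q (S m)) = 1%R).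
  { replace (Cpow q (S m)) with (1 + Cpow q (S m) - 1) by ring_C.
    rewrite H. replace (0 - 1) with (- (1)) by ring_C. rewrite Cmod_opp. apply Cmod_1. }
  rewrite Cmod_pow in Hpow.
  assert (Cmod q ^ S m < 1)%R by (apply pow_lt_1_compat; [split; [apply Cmod_ge_0 | exact Hq] | lia]).
  lra.
Qed.

Definition Kseq (q : C) (l : nat) : C := / (1 + Cpow q (S l)).

Lemma K_qdiff (q : C) (n : nat) : 1 - q <> 0 -> K n q = qint2 q * qdiff q (Kseq q) n 0.
Proof.
  intro Hq. rewrite qdiff_closed_form by exact Hq.
  unfold K, Kseq, Cdiv. rewrite Cmult_assoc. reflexivity.
Qed.

Lemma K_recurrence (q : C) (n : nat) : Cmod q < 1 ->
  K (S n) q + q * sum_n (fun k => RtoC (binomR (S n) k) * (Cpow q k * K k q)) (S n) = 0.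
Proof.
  intro Hq. pose proof (one_minus_neq0 q Hq) as Hq1.
  assert (Hseq : (fun l => Kseq q l + q * (Cpow q l * Kseq q l)) = (fun _ => 1)).
  { apply functional_extensionality. intro l. unfold Kseq.
    pose proof (one_plus_Cpow_neq0 q l Hq). simpl Cpow in *. field_C. assumption. }
  pose proof (qdiff_const q 1 n 0) as H0.
  rewrite <- Hseq, qdiff_linear, qdiff_qpow_mul in H0 by exact Hq1.
  rewrite (sum_n_ext _ (fun k => qint2 q * (RtoC (binomR (S n) k) *
                                   (Cpow q k * qdiff q (Kseq q) k 0))))
    by (intro k; rewrite K_qdiff by exact Hq1; ring_C).
  rewrite sum_n_Cmult_l, K_qdiff, <- (Cmult_0_r (qint2 q)), <- H0 by exact Hq1.
  simpl Cpow. ring_C.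
Qed.

Lemma K_succ (q : C) (n : nat) : Cmod q < 1 ->
  K (S n) q = - q * sum_n (fun k => RtoC (binomR (S n) k) * (Cpow q k * K k q)) n
              / (1 + Cpow q (S (S n))).
Proof.
  intro Hq. pose proof (K_recurrence q n Hq) as H.
  pose proof (one_plus_Cpow_neq0 q (S n) Hq) as HD.
  rewrite sum_n_succ_r in H. unfold binomR at 2 in H. rewrite Rcomplements.C_n_n in H.
  set (s := sum_n _ n) in *. set (D := 1 + Cpow q (S (S n))) in *.
  replace (- q * s) with (K (S n) q * D - (K (S n) q + q * (s + 1 * (Cpow q (S n) * K (S n) q))))
    by (unfold D; simpl Cpow; ring_C).
  rewrite H. field_C. exact HD.
Qed.

Lemma K_0 (q : C) : Cmod q < 1 -> K 0 q = 1.
Proof.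
  intro Hq. pose proof (one_plus_Cpow_neq0 q 0 Hq) as HD.
  unfold K, qint2, binomR. rewrite sum_O, Rcomplements.C_n_0. simpl Cpow in *.
  field_C. rewrite Cmult_1_r in HD. exact HD.
Qed.

Lemma Cmod_Cinv_sub_le (z b : C) : b <> 0 -> (Cmod (z - b) <= Cmod b / 2)%R ->
  (Cmod (/ z - / b) <= 2 * Cmod (z - b) / Cmod b ^ 2)%R.
Proof.
  intros Hb Hzb. pose proof (Cmod_gt_0 b) as Hr. apply Hr in Hb as Hb'.
  assert (Hz : (Cmod b / 2 <= Cmod z)%R).
  { pose proof (Cmod_triangle z (b - z)) as Htri.
    replace (z + (b - z)) with b in Htri by ring_C.
    replace (b - z) with (- (z - b)) in Htri by ring_C.
    rewrite Cmod_opp in Htri. lra. }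
  assert (Hz0 : z <> 0) by (intro H0; rewrite H0, Cmod_0 in Hz; lra).
  replace (/ z - / b) with (- (z - b) / (z * b)) by (field_C; auto).
  rewrite Cmod_div, Cmod_opp, Cmod_mult by (apply Cmult_neq_0; auto).
  unfold Rdiv. rewrite (Rmult_comm 2), Rmult_assoc.
  apply Rmult_le_compat_l; [apply Cmod_ge_0|].
  replace (2 * / Cmod b ^ 2)%R with (/ (Cmod b / 2 * Cmod b))%R by (field; lra).
  apply Rinv_le_contravar; nra.
Qed.

Section ComplexLimits.

Context {T : Type} {F : (T -> Prop) -> Prop} {FF : Filter F}.

Lemma filterlim_Cplus (f g : T -> C) (a b : C) :
  filterlim f F (locally a) -> filterlim g F (locally b) ->
  filterlim (fun x => f x + g x) F (locally (a + b)).
Proof.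
  intros Hf Hg. eapply filterlim_comp_2; [exact Hf | exact Hg |].
  apply (@filterlim_plus C_AbsRing C_NormedModule).
Qed.

Lemma filterlim_Copp (f : T -> C) (a : C) :
  filterlim f F (locally a) -> filterlim (fun x => - f x) F (locally (- a)).
Proof. intro Hf. exact (filterlim_comp _ _ _ f _ F _ _ Hf (@filterlim_opp C_AbsRing C_NormedModule a)). Qed.

Lemma filterlim_Cmult (f g : T -> C) (a b : C) :
  filterlim f F (locally a) -> filterlim g F (locally b) ->
  filterlim (fun x => f x * g x) F (locally (a * b)).
Proof.
  intros Hf Hg. eapply filterlim_comp_2; [exact Hf | exact Hg |].
  intros P HP. apply locally_C in HP.
  destruct (@filterlim_mult C_AbsRing a b P HP) as [Q R HQ HR HQR].
  apply (Filter_prod _ _ _ Q R); [apply locally_C, HQ | apply locally_C, HR | exact HQR].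
Qed.

Lemma filterlim_Cinv (g : T -> C) (b : C) : b <> 0 ->
  filterlim g F (locally b) -> filterlim (fun x => / g x) F (locally (/ b)).
Proof.
  intros Hb Hg. apply <- (@filterlim_locally_ball_norm C_AbsRing T C_NormedModule F FF).
  intro eps. pose proof (cond_pos eps) as Heps.
  assert (Hr : (0 < Cmod b)%R) by (apply Cmod_gt_0, Hb).
  assert (Hr2 : (0 < Cmod b ^ 2)%R) by (apply pow_lt, Hr).
  set (delta := Rmin (Cmod b / 2) (eps * Cmod b ^ 2 / 4)).
  assert (Hdelta : (0 < delta)%R) by (apply Rmin_pos; nra).
  eapply filter_imp;
    [|exact (proj1 (filterlim_locally_ball_norm (K := C_AbsRing) g b) Hg (mkposreal _ Hdelta))].
  intros x Hx. change (Cmod (g x - b) < delta)%R in Hx. change (Cmod (/ g x - / b) < eps)%R.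
  pose proof (Rmin_l (Cmod b / 2) (eps * Cmod b ^ 2 / 4)).
  pose proof (Rmin_r (Cmod b / 2) (eps * Cmod b ^ 2 / 4)).
  eapply Rle_lt_trans; [apply Cmod_Cinv_sub_le; [exact Hb | unfold delta in *; lra]|].
  apply (Rmult_lt_reg_r (Cmod b ^ 2)); [exact Hr2|].
  unfold Rdiv. rewrite Rmult_assoc, Rinv_l by lra. unfold delta in *. lra.
Qed.

Lemma filterlim_sum_n_C (g : nat -> T -> C) (l : nat -> C) (m : nat) :
  (forall k, (k <= m)%nat -> filterlim (g k) F (locally (l k))) ->
  filterlim (fun x => sum_n (fun k => g k x) m) F (locally (sum_n l m)).
Proof.
  induction m as [|m IH]; intro Hg.
  - rewrite sum_O. apply (filterlim_ext (g 0%nat)); [intro; rewrite sum_O; reflexivity|].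
    apply Hg. lia.
  - rewrite sum_n_succ_r.
    apply (filterlim_ext (fun x => sum_n (fun k => g k x) m + g (S m) x));
      [intro; rewrite sum_n_succ_r; reflexivity|].
    apply filterlim_Cplus; [apply IH; intros; apply Hg | apply Hg]; lia.
Qed.

End ComplexLimits.

Lemma sum_n_RtoC (f : nat -> R) (m : nat) :
  sum_n (fun k => RtoC (f k)) m = RtoC (sum_f_R0 f m).
Proof.
  induction m as [|m IH].
  - apply sum_O.
  - rewrite sum_n_succ_r, IH, <- RtoC_plus. reflexivity.
Qed.

#[local] Instance to_one_in_disk_filter : Filter to_one_in_disk.
Proof. apply within_filter, locally_filter. Qed.

Lemma to_one_in_disk_forall (P : C -> Prop) :
  (forall q, Cmod q < 1 -> P q) -> to_one_in_disk P.
Proof. intro HP. unfold to_one_in_disk, within. apply filter_forall. exact HP. Qed.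

Lemma filterlim_id_to_one : filterlim (fun q => q) to_one_in_disk (locally (RtoC 1)).
Proof. exact (filterlim_filter_le_1 _ (filter_le_within _) (filterlim_id _ _)). Qed.

Lemma filterlim_Cpow_to_one (k : nat) :
  filterlim (fun q => Cpow q k) to_one_in_disk (locally (RtoC 1)).
Proof.
  induction k as [|k IH].
  - exact (filterlim_const (F := to_one_in_disk) (RtoC 1)).
  - rewrite <- (Cmult_1_l (RtoC 1)).
    exact (filterlim_Cmult _ _ _ _ filterlim_id_to_one IH).
Qed.

Lemma filterlim_K_0 : filterlim (K 0) to_one_in_disk (locally (RtoC 1)).
Proof.
  apply (filterlim_ext_loc (fun _ => RtoC 1)); [|apply filterlim_const].
  apply to_one_in_disk_forall. intros q Hq. symmetry. exact (K_0 q Hq).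
Qed.

Lemma filterlim_K_succ (L : nat -> R) (n : nat) :
  (forall k, (k <= n)%nat -> filterlim (K k) to_one_in_disk (locally (RtoC (L k)))) ->
  filterlim (K (S n)) to_one_in_disk
    (locally (RtoC (- sum_f_R0 (fun k => Binomial.C (S n) k * L k) n / 2)%R)).
Proof.
  intro HL.
  apply (filterlim_ext_loc (fun q => - q *
    sum_n (fun k => RtoC (binomR (S n) k) * (Cpow q k * K k q)) n / (1 + Cpow q (S (S n))))).
  { apply to_one_in_disk_forall. intros q Hq. symmetry. exact (K_succ q n Hq). }
  replace (RtoC (- sum_f_R0 (fun k => Binomial.C (S n) k * L k) n / 2)%R) with
    (- (1) * sum_n (fun k => RtoC (binomR (S n) k) * (1 * RtoC (L k))) n * / (1 + 1)).
  - apply filterlim_Cmult; [apply filterlim_Cmult | apply filterlim_Cinv].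
    + apply filterlim_Copp, filterlim_id_to_one.
    + apply filterlim_sum_n_C. intros k Hk.
      apply filterlim_Cmult; [apply filterlim_const|].
      apply filterlim_Cmult; [apply filterlim_Cpow_to_one | apply HL, Hk].
    + intro H. apply (f_equal fst) in H. simpl in H. lra.
    + apply filterlim_Cplus; [apply filterlim_const | apply filterlim_Cpow_to_one].
  - rewrite (sum_n_ext _ (fun k => RtoC (Binomial.C (S n) k * L k)%R))
      by (intro k; rewrite RtoC_mult; unfold binomR; ring_C).
    rewrite sum_n_RtoC.
    unfold RtoC, Cmult, Cinv, Copp, Cplus. simpl. f_equal; field.
Qed.

Theorem mainTheorem4 (E : nat -> R) (HE : is_Euler_numbers E) (n : nat) :
  filterlim (K n) to_one_in_disk (locally (RtoC (E n))).
Proof.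
  induction n as [n IH] using Wf_nat.lt_wf_ind. destruct n as [|n].
  - rewrite (Euler_0 E HE). exact filterlim_K_0.
  - rewrite (Euler_succ E HE n). apply filterlim_K_succ.
    intros k Hk. apply IH. lia.
Qed.
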